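(* Let $\tau\ge1$ be an integer and $H=(\mathcal{V},\mathcal{E})$ a hypergraph. Then $H$ is inherently $\tau$-connected if and only if, for every strict total order $\prec$ on $\mathcal{V}$, the multigraph $G_{H,\prec}$ contains $\tau$ edge-disjoint spanning trees.
   Context: Hypergraphs may have repeated hyperedges; each hyperedge is a nonempty subset of $\mathcal{V}$. A multigraph $G=(\mathcal{V},\mathcal{E}_M)$ is induced by $H$ if its edge multiset decomposes as a disjoint union of edge sets of simple graphs $G_e=(e,E_e)$, $e\in\mathcal{E}$, each $G_e$ a connected simple graph on vertex set $e$. $H$ is inherently $\tau$-connected if every multigraph induced by $H$ contains at least $\tau$ edge-disjoint spanning trees. For a strict total order $\prec$ on $\mathcal{V}$, $G_{H,\prec}$ is the induced multigraph in which, for each hyperedge $e=\{v_{i_1},\dots,v_{i_k}\}$ listed so that $v_{i_1}\prec\cdots\prec v_{i_k}$, $G_e$ is the path with edges $\{v_{i_1},v_{i_2}\},\{v_{i_2},v_{i_3}\},\dots,\{v_{i_{k-1}},v_{i_k}\}$. *)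

From mathcomp Require Import all_boot.
Set Implicit Arguments. Unset Strict Implicit. Unset Printing Implicit Defensive.

Section HyperDefs.
Variable V : finType.

(* An (undirected, loopless) edge is a 2-element subset of V.
   A multigraph on V is a finite multiset (seq) of edges.
   A hypergraph on V is a seq of hyperedges (repetitions allowed). *)
Definition is_edge (f : {set V}) : bool := #|f| == 2.

Definition gadj (E : seq {set V}) : rel V :=
  fun x y => (x != y) && ([set x; y] \in E).

Definition connected_on (S : {set V}) (E : seq {set V}) : Prop :=
  forall x y, x \in S -> y \in S -> connect (gadj E) x y.

Definition spanning_tree (T : seq {set V}) : Prop :=
  [/\ all is_edge T, connected_on setT T &
      forall i, i < size T -> ~ connected_on setT (take i T ++ drop i.+1 T)].

(* G contains tau edge-disjoint spanning trees: tau spanning trees whose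
   multiset union is a sub-multiset of the edge multiset of G *)
Definition has_disjoint_spanning_trees (tau : nat) (G : seq {set V}) : Prop :=
  exists Ts : seq (seq {set V}),
    [/\ size Ts = tau, forall T, T \in Ts -> spanning_tree T &
        exists rest, perm_eq G (flatten Ts ++ rest)].

Definition conn_simple_graph_on (e : {set V}) (F : seq {set V}) : Prop :=
  [/\ uniq F, all (fun f => is_edge f && (f \subset e)) F & connected_on e F].

Definition induced_by (E : seq {set V}) (G : seq {set V}) : Prop :=
  exists Es : seq (seq {set V}),
    [/\ size Es = size E,
        forall i, i < size E -> conn_simple_graph_on (nth set0 E i) (nth [::] Es i) &
        perm_eq G (flatten Es)].

Definition inherently_connected (tau : nat) (E : seq {set V}) : Prop :=
  forall G, induced_by E G -> has_disjoint_spanning_trees tau G.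

Definition strict_total_order (r : rel V) : Prop :=
  [/\ irreflexive r, transitive r & forall x y, x != y -> r x y || r y x].

Definition path_edges (s : seq V) : seq {set V} :=
  [seq [set p.1; p.2] | p <- zip s (behead s)].

Definition G_order (E : seq {set V}) (r : rel V) : seq {set V} :=
  flatten [seq path_edges (sort r (enum e)) | e : {set V} <- E].

End HyperDefs.

(* G_{H,<} is itself induced by H, which gives one direction. Conversely, let G
   be induced by H and colour as many edges of G as possible with tau colours so
   that every colour class is a forest. If all classes are connected they are
   tau edge-disjoint spanning trees. Otherwise call an edge free when it is
   uncoloured in some colouring reached by exchanges (colour an uncoloured edge,
   uncolour an edge of the same class lying on the cycle this creates). As in
   the Nash-Williams--Tutte argument, every colour class restricted to the free
   edges spans the components of the free graph B, and counting edges gives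
   tau * c(B) > #(edges of G between components of B) + tau. Now order the
   vertices component by component of B: the path of each hyperedge in G_{H,<}
   then has no more crossing edges than any connected graph on that hyperedge,
   while each of the tau spanning trees of G_{H,<} needs c(B) - 1 crossing
   edges, a contradiction. *)

From mathcomp Require Import all_boot zify.
From Stdlib Require Import ClassicalEpsilon.
Set Implicit Arguments. Unset Strict Implicit. Unset Printing Implicit Defensive.

Local Notation gconn L := (connect (gadj L)).

Definition pbool (P : Prop) : bool := if excluded_middle_informative P then true else false.

Lemma pboolP (P : Prop) : reflect P (pbool P).
Proof. by rewrite /pbool; case: excluded_middle_informative => h; constructor. Qed.

Lemma ex_maximizer (T : finType) (P : T -> Prop) (f : T -> nat) x0 :
  P x0 -> exists2 x, P x & forall y, P y -> f y <= f x.
Proof.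
move=> /pboolP P0; case: (@arg_maxnP _ x0 (fun x => pbool (P x)) f P0) => x /pboolP Px xmax.
by exists x => // y /pboolP /xmax.
Qed.

Lemma connect_invariant (T : finType) (e : rel T) (Q : T -> Prop) x y :
  Q x -> (forall z t, Q z -> e z t -> Q t) -> connect e x y -> Q y.
Proof.
move=> Qx hQ /connectP[p + ->]; elim: p x Qx => //= z p IH x Qx /andP[exz pz].
exact: IH (hQ _ _ Qx exz) pz.
Qed.

Section Components.
Variable V : finType.
Implicit Types (L M : seq {set V}) (x y u v : V).

Lemma set2_inj x y u v : [set x; y] = [set u; v] ->
  (x = u /\ y = v) \/ (x = v /\ y = u).
Proof.
move=> e.
have hx : x \in [set u; v] by rewrite -e !inE eqxx.
have hu : u \in [set x; y] by rewrite e !inE eqxx.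
have hv : v \in [set x; y] by rewrite e !inE eqxx orbT.
move: hx hu hv; rewrite !inE => /orP[]/eqP -> /orP[]/eqP hu /orP[]/eqP hv; subst; auto.
- have : y \in [set u; u] by rewrite -e !inE eqxx orbT.
  by rewrite !inE orbb => /eqP ->; auto.
- have : y \in [set v; v] by rewrite -e !inE eqxx orbT.
  by rewrite !inE orbb => /eqP ->; auto.
Qed.

Lemma gconn_sym L : connect_sym (gadj L).
Proof. by apply: sym_connect_sym => x y; rewrite /gadj eq_sym setUC. Qed.

Lemma gconn_edge L x y : x != y -> [set x; y] \in L -> gconn L x y.
Proof. by move=> nxy h; apply: connect1; rewrite /gadj nxy h. Qed.

Lemma sub_gconn L M : {subset L <= M} -> forall x y, gconn L x y -> gconn M x y.
Proof.
move=> sLM; apply: connect_sub => x y /andP[nxy h].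
by apply: gconn_edge => //; apply: sLM.
Qed.

Lemma gconn_cons L u v x y : u != v -> gconn ([set u; v] :: L) x y ->
  [\/ gconn L x y, gconn L x u /\ gconn L v y | gconn L x v /\ gconn L u y].
Proof.
move=> nuv; apply: (connect_invariant (Q := fun y =>
  [\/ gconn L x y, gconn L x u /\ gconn L v y | gconn L x v /\ gconn L u y])).
  by apply: Or31; exact: connect0.
move=> z t Qz /andP[nzt]; rewrite inE => /orP[/eqP e|hL].
  have [[? ?]|[? ?]] := set2_inj e; subst z t.
    by case: Qz => [h|[h _]|[h _]]; [apply: Or32 | apply: Or32 | apply: Or31].
  by case: Qz => [h|[h _]|[h _]]; [apply: Or33 | apply: Or31 | apply: Or33].
have et : gconn L z t by apply: gconn_edge.
by case: Qz => [h|[h1 h2]|[h1 h2]];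
  [apply: Or31 | apply: Or32 | apply: Or33]; rewrite ?(connect_trans _ et).
Qed.

Lemma gconn_nil x y : gconn [::] x y -> x = y.
Proof. by move/connectP => [[|z p] //= /andP[]]; rewrite /gadj in_nil andbF. Qed.

Definition comps (R : rel V) : {set {set V}} := [set [set y | R x y] | x in V].
Definition ncomp L := #|comps (gconn L)|.

Lemma eq_ncomp L M : gconn L =2 gconn M -> ncomp L = ncomp M.
Proof.
move=> e; rewrite /ncomp /comps (eq_imset _ (_ : _ =1 fun x => [set y | gconn M x y])) //.
by move=> x; apply/setP => y; rewrite !inE e.
Qed.

Lemma comp_eq L x y : gconn L x y -> [set z | gconn L x z] = [set z | gconn L y z].
Proof.
move=> hxy; apply/setP => z; rewrite !inE; apply/idP/idP; last exact: connect_trans.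
by rewrite gconn_sym in hxy; apply: connect_trans.
Qed.

Definition saturate L (C : {set V}) : {set V} := [set y | [exists x in C, gconn L x y]].

Lemma saturate_comp L M x : (forall a b, gconn M a b -> gconn L a b) ->
  saturate L [set y | gconn M x y] = [set y | gconn L x y].
Proof.
move=> sub; apply/setP => y; rewrite !inE; apply/existsP/idP.
  by case=> z /andP[]; rewrite inE => /sub; apply: connect_trans.
by move=> h; exists x; rewrite inE connect0.
Qed.

Lemma comps_saturate L M : (forall a b, gconn M a b -> gconn L a b) ->
  comps (gconn L) = saturate L @: comps (gconn M).
Proof.
move=> sub; rewrite /comps -imset_comp; apply: eq_imset => x /=.
by rewrite saturate_comp.
Qed.

Lemma leq_ncomp L M : (forall a b, gconn M a b -> gconn L a b) -> ncomp L <= ncomp M.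
Proof. by move=> sub; rewrite /ncomp (comps_saturate sub) leq_imset_card. Qed.

Lemma ncomp_bridge L u v : u != v -> ~~ gconn L u v ->
  ncomp ([set u; v] :: L) + 1 = ncomp L.
Proof.
move=> nuv nc; set M := [set u; v] :: L.
have sub : forall a b, gconn L a b -> gconn M a b.
  by apply: sub_gconn => z; rewrite inE orbC => ->.
have hMuv : gconn M u v by apply: gconn_edge => //; rewrite !inE eqxx.
set Cv := [set y | gconn L v y].
have nCuv : [set y | gconn L u y] != Cv.
  apply: contra nc => /eqP/setP/(_ u); rewrite !inE connect0 => /esym.
  by rewrite gconn_sym.
have cM : comps (gconn M) = saturate M @: (comps (gconn L) :\ Cv).
  apply/eqP; rewrite eqEsubset; apply/andP; split; last first.
    by rewrite (comps_saturate sub) imsetS ?subD1set.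
  apply/subsetP => _ /imsetP[x _ ->]; apply/imsetP.
  have [hvx|hvx] := boolP (gconn L v x).
    exists [set y | gconn L u y]; first by rewrite !inE nCuv imset_f.
    rewrite saturate_comp //; apply/esym/comp_eq.
    exact: connect_trans hMuv (sub _ _ hvx).
  exists [set y | gconn L x y]; last by rewrite saturate_comp.
  rewrite !inE imset_f // andbT; apply: contra hvx => /eqP/setP/(_ x).
  by rewrite !inE connect0.
rewrite /ncomp cM card_in_imset; last first.
  move=> C1 C2 /setD1P[n1 /imsetP[a _ eC1]] /setD1P[n2 /imsetP[b _ eC2]]; subst C1 C2.
  rewrite !saturate_comp // => /setP/(_ b); rewrite !inE connect0.
  case/(gconn_cons nuv) => [h|[_ h]|[h _]].
  - by rewrite (comp_eq h).
  - by move: n2; rewrite -(comp_eq h) eqxx.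
  - by move: n1; rewrite (comp_eq h) eqxx.
by rewrite [in RHS](cardsD1 Cv) imset_f // addnC.
Qed.

Lemma ncomp_cons_conn L u v : gconn L u v -> ncomp ([set u; v] :: L) = ncomp L.
Proof.
move=> huv; apply: eq_ncomp => a b; apply/idP/idP; last first.
  by apply: sub_gconn => z; rewrite inE orbC => ->.
apply: (connect_invariant (Q := gconn L a)) => [|z t hz /andP[nzt]]; first exact: connect0.
rewrite inE => /orP[/eqP e|h]; last exact: connect_trans hz (gconn_edge nzt h).
have [[? ?]|[? ?]] := set2_inj e; subst z t; first exact: connect_trans hz huv.
by rewrite gconn_sym in huv; apply: connect_trans hz huv.
Qed.

Lemma ncomp_cons L f : ncomp L <= ncomp (f :: L) + 1.
Proof.
have [/existsP[u /existsP[v /andP[nuv /eqP ->]]]|] :=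
  boolP [exists u, exists v, (u != v) && (f == [set u; v])].
  have [h|h] := boolP (gconn L u v); first by rewrite ncomp_cons_conn ?leq_addr.
  by rewrite ncomp_bridge.
move=> nf; rewrite (@eq_ncomp (f :: L) L) ?leq_addr //.
apply: eq_connect => x y; rewrite /gadj inE; case: (x =P y) => //= /eqP nxy.
suff -> : ([set x; y] == f) = false by [].
by apply: contraNF nf => /eqP <-; apply/existsP; exists x; apply/existsP; exists y; rewrite nxy eqxx.
Qed.

Lemma ncomp_cat M L : ncomp L <= ncomp (M ++ L) + size M.
Proof. by elim: M => [|f M IH] /=; [rewrite addn0 | have := ncomp_cons (M ++ L) f; lia]. Qed.

Lemma ncomp_le1 L : (forall x y, gconn L x y) -> ncomp L <= 1.
Proof.
move=> h; apply/card_le1_eqP => _ _ /imsetP[a _ ->] /imsetP[b _ ->].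
exact: comp_eq.
Qed.

Lemma ncomp_gt0 L (x : V) : 0 < ncomp L.
Proof. by rewrite card_gt0; apply/set0Pn; exists [set y | gconn L x y]; apply: imset_f. Qed.

Lemma ncomp_ge2 L x y : ~~ gconn L x y -> 2 <= ncomp L.
Proof.
move=> nxy; rewrite /ncomp (cardsD1 [set z | gconn L x z]) imset_f // ltnS card_gt0.
apply/set0Pn; exists [set z | gconn L y z]; rewrite !inE imset_f // andbT.
by apply: contra nxy => /eqP/setP/(_ y); rewrite !inE connect0 => /esym ->.
Qed.

Lemma ncomp_nil : ncomp [::] = #|V|.
Proof.
rewrite /ncomp /comps (@eq_imset _ _ _ (fun x => [set x])); last first.
  move=> x; apply/setP => y; rewrite !inE.
  by apply/idP/idP => [/gconn_nil ->|/eqP ->]; [|exact: connect0].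
by rewrite card_imset //; exact: set1_inj.
Qed.

End Components.

Section SortCoarsening.
Variables (T : Type) (leT k : rel T).
Hypothesis leT_sub : forall x y, leT x y -> k x y.
Hypothesis leT_compl : forall x y, ~~ leT x y -> k y x.

Lemma merge_path_coarse x s1 s2 :
  path k x s1 -> path k x s2 -> path k x (merge leT s1 s2).
Proof.
elim: s1 s2 x => //= x1 s1 IHs1; elim=> //= x2 s2 IHs2 x /andP[k1 p1] /andP[k2 p2].
case: ifP => le12 /=.
  by rewrite k1 /=; apply: IHs1 => //=; rewrite leT_sub.
by rewrite k2 /=; apply: IHs2 => //=; rewrite leT_compl ?le12.
Qed.

Lemma merge_sorted_coarse s1 s2 :
  sorted k s1 -> sorted k s2 -> sorted k (merge leT s1 s2).
Proof.
case: s1 => [|x1 s1] //; case: s2 => [|x2 s2] // p1 p2 /=; case: ifP => le12.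
  by apply: merge_path_coarse => //=; rewrite leT_sub.
by apply: (merge_path_coarse (s1 := x1 :: s1)) => //=; rewrite leT_compl ?le12.
Qed.

Lemma sort_sorted_coarse s : sorted k (sort leT s).
Proof.
have push s1 ss : sorted k s1 -> all (sorted k) ss ->
    all (sorted k) (merge_sort_push leT s1 ss).
  elim: ss s1 => [|s2 ss IH] s1 hs1 /=; first by rewrite hs1.
  case: s2 => [|x2 s2] /andP[h2 hss] /=; first by rewrite hs1.
  by apply: IH => //; apply: merge_sorted_coarse.
have pop s1 ss : sorted k s1 -> all (sorted k) ss -> sorted k (merge_sort_pop leT s1 ss).
  elim: ss s1 => [|s2 ss IH] s1 hs1 //= /andP[h2 hss].
  by apply: IH => //; apply: merge_sorted_coarse.
rewrite sortE; suff : forall ss, all (sorted k) ss -> sorted k (sort_rec1 leT ss s) by apply.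
elim: s => [|x s IH] ss hss /=; first exact: pop.
by apply: IH; apply: push.
Qed.

End SortCoarsening.

Section PathEdges.
Variable V : finType.
Implicit Types (s : seq V) (x y : V).

Lemma path_edges_cons2 x y s :
  path_edges [:: x, y & s] = [set x; y] :: path_edges (y :: s).
Proof. by []. Qed.

Lemma path_edgesP s f : uniq s -> f \in path_edges s ->
  exists x y, [/\ x != y, f = [set x; y], x \in s & y \in s].
Proof.
elim: s => [|v [|w s] IH] //; rewrite cons_uniq => /andP[nv us].
rewrite path_edges_cons2 inE => /orP[/eqP ->|h].
  exists v, w; split; rewrite ?inE ?eqxx ?orbT //.
  by apply: contraNneq nv => ->; rewrite inE eqxx.
have [x [y [nxy -> hx hy]]] := IH us h.
by exists x, y; split; rewrite // inE ?hx ?hy orbT.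
Qed.

Lemma path_edges_set2 s x y : uniq s -> [set x; y] \in path_edges s -> x \in s /\ y \in s.
Proof.
move=> us /(path_edgesP us) [a [b [_ e ha hb]]].
have := set2_inj e; by case=> -[-> ->].
Qed.

Lemma path_edges_uniq s : uniq s -> uniq (path_edges s).
Proof.
elim: s => [|v [|w s] IH] //; rewrite cons_uniq => /andP[nv us].
rewrite path_edges_cons2 cons_uniq IH // andbT.
apply: contra nv => /(path_edgesP us) [x [y [_ e hx hy]]].
have : v \in [set x; y] by rewrite -e !inE eqxx.
by rewrite !inE => /orP[]/eqP ->.
Qed.

Lemma gconn_path_edges s x y : uniq s -> x \in s -> y \in s -> gconn (path_edges s) x y.
Proof.
elim: s x y => [|v [|w s] IH] x y //.
  by rewrite !inE => _ /eqP -> /eqP ->; exact: connect0.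
rewrite cons_uniq => /andP[nv us].
have sub : forall a b, gconn (path_edges (w :: s)) a b -> gconn (path_edges (v :: w :: s)) a b.
  by apply: sub_gconn => f; rewrite path_edges_cons2 inE orbC => ->.
have nvw : v != w by apply: contraNneq nv => ->; rewrite inE eqxx.
have evw : gconn (path_edges (v :: w :: s)) v w.
  by apply: gconn_edge => //; rewrite path_edges_cons2 inE eqxx.
have hv a : a \in w :: s -> gconn (path_edges (v :: w :: s)) v a.
  by move=> ha; apply: connect_trans evw (sub _ _ (IH _ _ us _ ha)); rewrite inE eqxx.
rewrite inE => /orP[/eqP ->|hx]; rewrite inE => /orP[/eqP ->|hy].
- exact: connect0.
- exact: hv.
- by rewrite gconn_sym; apply: hv.
- exact: sub (IH _ _ us hx hy).
Qed.

Lemma conn_simple_graph_path_edges (e : {set V}) s : uniq s -> s =i e ->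
  conn_simple_graph_on e (path_edges s).
Proof.
move=> us se; split; first exact: path_edges_uniq.
  apply/allP => f /(path_edgesP us) [x [y [nxy -> hx hy]]].
  by rewrite /is_edge cards2 nxy subUset !sub1set -!se hx hy.
by move=> x y; rewrite -!se; apply: gconn_path_edges.
Qed.

Lemma induced_G_order (E : seq {set V}) (r : rel V) : induced_by E (G_order E r).
Proof.
exists [seq path_edges (sort r (enum e)) | e : {set V} <- E]; split => //.
- by rewrite size_map.
- move=> i hi; rewrite (nth_map set0) //; apply: conn_simple_graph_path_edges.
    by rewrite sort_uniq enum_uniq.
  by move=> z; rewrite mem_sort mem_enum.
Qed.

End PathEdges.

Lemma leq_sumn (s1 s2 : seq nat) : size s1 = size s2 ->
  (forall i, i < size s1 -> nth 0 s1 i <= nth 0 s2 i) -> sumn s1 <= sumn s2.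
Proof.
elim: s1 s2 => [|a s1 IH] [|b s2] //= [hs] h.
by apply: leq_add; [exact: (h 0) | apply: IH => // i; exact: (h i.+1)].
Qed.

Lemma count_andC (T : Type) (a b : pred T) s :
  count (fun x => a x && b x) s + count (fun x => a x && ~~ b x) s = count a s.
Proof.
rewrite -[RHS]size_filter -[RHS](count_predC b) !count_filter.
by congr (_ + _); apply: eq_count => x /=; rewrite andbC.
Qed.

Section Crossings.
Variables (V : finType) (B : seq {set V}).
Implicit Types (L : seq {set V}) (x y : V).

Definition crossing (f : {set V}) : bool :=
  [exists x, exists y, (f == [set x; y]) && ~~ gconn B x y].

Lemma crossing_set2 x y : crossing [set x; y] = ~~ gconn B x y.
Proof.
apply/idP/idP => [/existsP[a /existsP[b /andP[/eqP e nab]]]|nxy]; last first.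
  by apply/existsP; exists x; apply/existsP; exists y; rewrite eqxx.
by have [[-> ->]|[-> ->]] := set2_inj e; rewrite // gconn_sym.
Qed.

Lemma gconn_crossings L x y : gconn L x y -> gconn (filter crossing L ++ B) x y.
Proof.
apply: connect_sub => u w /andP[nuw h].
have [hc|] := boolP (crossing [set u; w]).
  by apply: gconn_edge => //; rewrite mem_cat mem_filter hc h.
rewrite crossing_set2 negbK; apply: sub_gconn => f.
by rewrite mem_cat orbC => ->.
Qed.

Lemma ncomp_le_crossings L : connected_on setT L -> ncomp B <= count crossing L + 1.
Proof.
move=> hL; have := ncomp_cat (filter crossing L) B; rewrite size_filter.
have : ncomp (filter crossing L ++ B) <= 1.
  by apply: ncomp_le1 => x y; apply: gconn_crossings; apply: hL.
lia.
Qed.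

Definition comp_rank x : nat := enum_rank (root (gadj B) x).

Lemma eq_comp_rank x y : (comp_rank x == comp_rank y) = gconn B x y.
Proof.
rewrite -(root_connect (gconn_sym B)) /comp_rank.
by apply/eqP/eqP => [/val_inj/enum_rank_inj|->].
Qed.

Definition comp_order x y : bool :=
  (comp_rank x < comp_rank y) ||
  ((comp_rank x == comp_rank y) && (enum_rank x < enum_rank y)).

Lemma comp_order_strict_total : strict_total_order comp_order.
Proof.
split.
- by move=> x; rewrite /comp_order ltnn eqxx ltnn.
- move=> y x z; rewrite /comp_order.
  case/orP=> [h1|/andP[/eqP e1 h1]] /orP[h2|/andP[/eqP e2 h2]].
  + by rewrite (ltn_trans h1 h2).
  + by rewrite -e2 h1.
  + by rewrite e1 h2.
  + by rewrite e1 e2 eqxx (ltn_trans h1 h2) orbT.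
- move=> x y nxy; rewrite /comp_order.
  have ne : (enum_rank x : nat) != enum_rank y.
    by apply: contraNneq nxy => /val_inj/enum_rank_inj ->.
  case: (ltngtP (comp_rank x) (comp_rank y)) => //= _.
  by case: (ltngtP (enum_rank x : nat) (enum_rank y)) => // e; rewrite e eqxx in ne.
Qed.

Lemma sorted_comp_order s :
  sorted [rel x y | comp_rank x <= comp_rank y] (sort comp_order s).
Proof.
apply: sort_sorted_coarse => x y /=; rewrite /comp_order.
  by case/orP=> [/ltnW //|/andP[/eqP -> _]].
by rewrite negb_or => /andP[]; rewrite -leqNgt.
Qed.

(* Along a path whose component ranks never decrease, each crossing edge enters
   a new component of B, so the crossing edges form a forest over B. *)
Lemma ncomp_monotone_path s :
  sorted [rel x y | comp_rank x <= comp_rank y] s ->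
  ncomp B = ncomp (filter crossing (path_edges s) ++ B) + count crossing (path_edges s) /\
  (forall a b, gconn (filter crossing (path_edges s) ++ B) a b -> gconn B a b \/
     (comp_rank (head a s) <= comp_rank a /\ comp_rank (head a s) <= comp_rank b)).
Proof.
elim: s => [|v [|w s] IH]; try by rewrite /= addn0; split => // a b; left.
rewrite [sorted _ _]/= => /andP[hvw hs]; have [IH1 IH2] := IH hs.
have rankB a b : gconn B a b -> comp_rank a = comp_rank b by rewrite -eq_comp_rank => /eqP.
rewrite path_edges_cons2 /=.
have [hc|hc] := boolP (crossing [set v; w]); last first.
  split => // a b /IH2 [|[h1 h2]]; [by left | right; rewrite /= in h1 h2; lia].
rewrite cat_cons add1n.
set L := filter crossing (path_edges (w :: s)) ++ B in IH1 IH2 *.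
have nB : ~~ gconn B v w by rewrite -crossing_set2.
have nvw : v != w by apply: contraNneq nB => ->; exact: connect0.
have nL : ~~ gconn L v w.
  apply/negP => /IH2 [|[h1 _]]; first exact/negP.
  by move/negP: nB; apply; rewrite -eq_comp_rank eqn_leq hvw.
split; first by have := ncomp_bridge nvw nL; rewrite IH1; lia.
move=> a b /(gconn_cons nvw) [h|[h1 h2]|[h1 h2]].
  by case: (IH2 _ _ h) => [|[h1 h2]]; [left | right; simpl in *; lia].
all: right; case: (IH2 _ _ h1) => [/rankB e1|[e1 e1']];
  case: (IH2 _ _ h2) => [/rankB e2|[e2 e2']]; simpl in *; split; lia.
Qed.

Definition sorted_path (e : {set V}) : seq {set V} := path_edges (sort comp_order (enum e)).

(* The crossing edges of the sorted path form a forest over B, which no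
   connected graph on e can undercut. *)
Lemma count_crossing_sorted_path e F : conn_simple_graph_on e F ->
  count crossing (sorted_path e) <= count crossing F.
Proof.
move=> [_ _ hF]; rewrite /sorted_path; set s := sort comp_order (enum e).
have us : uniq s by rewrite sort_uniq enum_uniq.
have [hs _] := ncomp_monotone_path (sorted_comp_order (enum e)); rewrite -/s in hs.
have := ncomp_cat (filter crossing F) B; rewrite size_filter.
suff : ncomp (filter crossing F ++ B) <= ncomp (filter crossing (path_edges s) ++ B) by lia.
apply: leq_ncomp; apply: connect_sub => u w /andP[nuw].
rewrite mem_cat => /orP[|hB]; last first.
  by apply: sub_gconn (gconn_edge nuw hB) => f; rewrite mem_cat orbC => ->.
rewrite mem_filter => /andP[_ /(path_edges_set2 us) [hu hw]].
by apply: gconn_crossings; apply: hF; rewrite -(mem_enum (mem e)) -(mem_sort comp_order).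
Qed.

Lemma spanning_trees_crossings (Ts : seq (seq {set V})) :
  (forall T, T \in Ts -> spanning_tree T) ->
  size Ts * ncomp B <= sumn [seq count crossing T | T <- Ts] + size Ts.
Proof.
elim: Ts => [|T Ts IH] //= hTs.
have [_ hT _] := hTs T (mem_head _ _).
have := IH (fun T' hT' => hTs T' (mem_behead (s := T :: Ts) hT')).
have := ncomp_le_crossings hT; rewrite mulSn; lia.
Qed.

Lemma count_crossing_induced E G : induced_by E G ->
  count crossing (G_order E comp_order) <= count crossing G.
Proof.
move=> [Es [hsz hEs /permP ->]]; rewrite /G_order !count_flatten -map_comp.
apply: leq_sumn; rewrite !size_map // => i hi.
by rewrite !(nth_map set0, nth_map [::]) ?hsz //; apply: count_crossing_sorted_path; apply: hEs.
Qed.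

Lemma ncomp_le_crossings_induced tau E G :
  has_disjoint_spanning_trees tau (G_order E comp_order) -> induced_by E G ->
  tau * ncomp B <= count crossing G + tau.
Proof.
move=> [Ts [<- hTs [rest /permP/(_ crossing) hcount]]] hG.
rewrite count_cat (count_flatten Ts) in hcount.
apply: leq_trans (spanning_trees_crossings hTs) _; rewrite leq_add2r.
by apply: leq_trans (count_crossing_induced hG); rewrite hcount leq_addr.
Qed.

End Crossings.

Lemma mem_zip (S T : eqType) (s : seq S) (t : seq T) u w :
  (u, w) \in zip s t -> u \in s /\ w \in t.
Proof.
elim: s t => [|a s IH] [|b t] //=; rewrite inE => /orP[/eqP [-> ->]|/IH [hu hw]].
  by rewrite !inE !eqxx.
by rewrite !inE hu hw !orbT.
Qed.

Lemma path_zip (T : Type) (e : rel T) x p :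
  path e x p = all [pred q | e q.1 q.2] (zip (x :: p) p).
Proof. by elim: p x => [|z p IH] x //=; rewrite IH. Qed.

Lemma set2_notin (V : finType) (s : seq V) y b a c :
  y \notin s -> a \in s -> c \in s -> [set y; b] != [set a; c].
Proof.
move=> ny ha hc; apply/eqP => e; have : y \in [set a; c] by rewrite -e !inE eqxx.
by rewrite !inE => /orP[]/eqP ey; rewrite ey ?ha ?hc in ny.
Qed.

Lemma simple_path_cut (V : finType) (e e' : rel V) x p u w :
  path e x p -> uniq (x :: p) -> (u, w) \in zip (x :: p) p ->
  (forall a c, e a c -> [set a; c] != [set u; w] -> e' a c) ->
  connect e' x u /\ connect e' w (last x p).
Proof.
elim: p x => [|z p IH] x //= /andP[exz pth] /andP[nx up].
rewrite inE => /orP[/eqP [-> ->]|hz] he'.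
  split; first exact: connect0.
  apply: (path_connect (sub_in_path _ (allss (z :: p)) pth)) (mem_last z p).
  move=> a c ha hc eac; apply: (he' _ _ eac); rewrite eq_sym.
  by apply: set2_notin nx _ _; [exact: ha | exact: hc].
have [hu hw] := mem_zip hz; have [h1 h2] := IH z pth up hz he'.
split => //; apply: connect_trans h1; apply: connect1; apply: (he' _ _ exz).
by apply: set2_notin nx hu _; rewrite inE hw orbT.
Qed.

Section Forests.
Variables (V : finType) (m : nat) (g : 'I_m -> {set V}).
Hypothesis g2 : forall j, #|g j| == 2.
Implicit Types (P Q : pred 'I_m) (x y : V).

Definition edges P : seq {set V} := [seq g j | j <- enum 'I_m & P j].

Lemma edgesP P f : reflect (exists2 j, P j & f = g j) (f \in edges P).
Proof.
apply: (iffP mapP) => [[j]|[j hj ->]]; last by exists j; rewrite // mem_filter mem_enum hj.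
by rewrite mem_filter mem_enum andbT => hj ->; exists j.
Qed.

Lemma gconn_edges_sub P Q : subpred P Q ->
  forall x y, gconn (edges P) x y -> gconn (edges Q) x y.
Proof. by move=> PQ; apply: sub_gconn => f /edgesP[j /PQ hj ->]; apply/edgesP; exists j. Qed.

Lemma edge_ends j : exists x y, x != y /\ g j = [set x; y].
Proof. exact/cards2P/g2. Qed.

Definition forest P : Prop :=
  forall j, P j -> forall x y, x != y -> g j = [set x; y] ->
    ~~ gconn (edges (fun j' => P j' && (j' != j))) x y.

Lemma forest_sub P Q : forest P -> subpred Q P -> forest Q.
Proof.
move=> hP QP j qj x y nxy ej; apply: contra (hP j (QP _ qj) x y nxy ej).
by apply: gconn_edges_sub => j' /andP[/QP -> ->].
Qed.

Lemma eq_forest P Q : P =1 Q -> forest P -> forest Q.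
Proof. by move=> PQ hP; apply: forest_sub hP _ => j; rewrite PQ. Qed.

Lemma forest_add P j0 x y : forest P -> ~~ P j0 -> x != y ->
  g j0 = [set x; y] -> ~~ gconn (edges P) x y -> forest (fun j => (j == j0) || P j).
Proof.
move=> hP nP0 nxy e0 nc j hj a b nab ej; apply/negP => hab.
have sub_P Q : subpred Q (fun j' => ((j' == j0) || P j') && (j' != j0)) ->
    forall c d, gconn (edges Q) c d -> gconn (edges P) c d.
  by move=> QP; apply: gconn_edges_sub => j' /QP /andP[/orP[/eqP -> /negP|]].
have [ejj|njj] := eqVneq j j0.
  subst j; move/negP: nc; apply.
  have [[<- <-]|[<- <-]] := set2_inj (etrans (esym ej) e0); first exact: sub_P hab.
  by rewrite gconn_sym; apply: sub_P hab.
have Pj : P j by move: hj; rewrite (negbTE njj).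
set P' := fun j' => P j' && (j' != j).
have hP' c d : gconn (edges P') c d -> gconn (edges P) c d.
  by apply: gconn_edges_sub => j' /andP[].
have eab : gconn (edges P) a b by apply: gconn_edge => //; apply/edgesP; exists j.
have nP' := hP j Pj a b nab ej.
have hab' : gconn ([set x; y] :: edges P') a b.
  move: hab; apply: sub_gconn => f /edgesP [j' /andP[/orP[/eqP ->|pj'] nj'] ->].
    by rewrite -e0 mem_head.
  by rewrite inE; apply/orP; right; apply/edgesP; exists j' => //; rewrite /P' pj'.
case: (gconn_cons nxy hab') => [h|[h1 h2]|[h1 h2]]; first by rewrite h in nP'.
- move/negP: nc; apply; rewrite gconn_sym in h1; rewrite gconn_sym in h2.
  exact: connect_trans (hP' _ _ h1) (connect_trans eab (hP' _ _ h2)).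
- move/negP: nc; apply; rewrite gconn_sym in eab.
  exact: connect_trans (hP' _ _ h2) (connect_trans eab (hP' _ _ h1)).
Qed.

(* Each edge of a forest merges two components. *)
Lemma ncomp_forest P : forest P -> ncomp (edges P) + count P (enum 'I_m) = #|V|.
Proof.
move=> hP; rewrite -size_filter -ncomp_nil /edges.
have us : uniq [seq j <- enum 'I_m | P j] by rewrite filter_uniq // enum_uniq.
have : forall j, j \in [seq j <- enum 'I_m | P j] -> forall x y, x != y ->
    g j = [set x; y] -> ~~ gconn (map g (rem j [seq j <- enum 'I_m | P j])) x y.
  move=> j; rewrite mem_filter mem_enum andbT => pj x y nxy e.
  apply: contra (hP j pj x y nxy e); apply: sub_gconn => f /mapP [j' hj' ->].
  apply/edgesP; exists j' => //; move: hj'.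
  by rewrite (mem_rem_uniq _ us) !inE mem_filter mem_enum andbT => /andP[-> ->].
move: us.
elim: [seq j <- enum 'I_m | P j] => [|j s IH] /=; first by rewrite addn0.
move=> /andP[nj us] h.
have [x [y [nxy exy]]] := edge_ends j.
have nc : ~~ gconn (map g s) x y by have := h j (mem_head _ _) x y nxy exy; rewrite /= eqxx.
have IHs : ncomp (map g s) + size s = ncomp ([::] : seq {set V}).
  apply: (IH us) => j' hj' a b nab e'.
  apply: contra (h j' (mem_behead (s := j :: s) hj') a b nab e').
  apply: sub_gconn => f hf /=.
  have -> : (j == j') = false by apply: contraNF nj => /eqP ->.
  by rewrite inE hf orbT.
by rewrite -IHs exy -(ncomp_bridge nxy nc) addnAC addn1 addnS.
Qed.

Lemma spanning_tree_forest P : forest P -> (forall x y, gconn (edges P) x y) ->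
  spanning_tree (edges P).
Proof.
move=> hP hc; split; first by apply/allP => f /edgesP [j _ ->]; exact: g2.
  by move=> x y _ _; apply: hc.
move=> t; rewrite /edges; set s := [seq j <- enum 'I_m | P j].
have us : uniq s by rewrite filter_uniq // enum_uniq.
rewrite size_map => ht.
have [j0 _] : exists j0 : 'I_m, true by case: (s) ht => [|j0 ?] //; exists j0.
have Pjt : P (nth j0 s t) by have := mem_nth j0 ht; rewrite mem_filter => /andP[].
have [x [y [nxy ej]]] := edge_ends (nth j0 s t).
move=> hcut; apply: (negP (hP _ Pjt x y nxy ej)).
have := hcut x y (in_setT _) (in_setT _); apply: sub_gconn => f.
rewrite -map_take -map_drop -map_cat -[in take _ _](index_uniq j0 ht us).
rewrite -[in drop _ _](index_uniq j0 ht us) -remE => /mapP [j' hj' ->].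
apply/edgesP; exists j' => //; move: hj'.
by rewrite (mem_rem_uniq _ us) !inE mem_filter => /andP[-> /andP[-> _]].
Qed.

Lemma forest_path_cut P x p u w b : forest P -> path (gadj (edges P)) x p ->
  uniq (x :: p) -> (u, w) \in zip (x :: p) p -> P b -> g b = [set u; w] ->
  ~~ gconn (edges (fun j => P j && (j != b))) x (last x p).
Proof.
move=> hP pth up huw Pb eb.
have /andP[nuw _] : gadj (edges P) u w by move: pth; rewrite path_zip => /allP/(_ _ huw).
set P' := fun j => P j && (j != b).
have keep a c : gadj (edges P) a c -> [set a; c] != [set u; w] -> gadj (edges P') a c.
  move=> /andP[nac /edgesP [b' Pb' eb']] ne; rewrite /gadj nac; apply/edgesP.
  by exists b' => //; rewrite /P' Pb'; apply: contraNneq ne => ebb; rewrite eb' ebb eb.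
have [hxu hwy] := simple_path_cut pth up huw keep.
apply: contra (hP b Pb u w nuw eb) => hxy; rewrite gconn_sym in hxu.
by rewrite gconn_sym in hwy; apply: connect_trans hxu (connect_trans hxy hwy).
Qed.

End Forests.

Section Colorings.
Variables (V : finType) (m k : nat) (g : 'I_m -> {set V}).
Hypothesis g2 : forall j, #|g j| == 2.
Local Notation edges := (edges g).
Local Notation forest := (forest g).

Definition coloring := {ffun 'I_m -> option 'I_k}.
Implicit Types (F : coloring) (a b j : 'I_m) (i : 'I_k).

Definition color_class F i : pred 'I_m := fun j => F j == Some i.
Definition forest_coloring F := forall i, forest (color_class F i).
Definition ncolored F := #|[set j | F j != None]|.

Definition color_edge F a i : coloring := [ffun j => if j == a then Some i else F j].

Definition recolor F a b i : coloring :=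
  [ffun j => if j == a then Some i else if j == b then None else F j].

Lemma forest_coloring0 : forest_coloring [ffun => None].
Proof. by move=> i j; rewrite /color_class ffunE. Qed.

Lemma ncolored_color_edge F a i : F a = None -> ncolored (color_edge F a i) = (ncolored F).+1.
Proof.
move=> Fa; rewrite /ncolored.
have -> : [set j | color_edge F a i j != None] = a |: [set j | F j != None].
  by apply/setP => j; rewrite !inE ffunE; case: (eqVneq j a).
by rewrite cardsU1 !inE Fa.
Qed.

Lemma ncolored_recolor F a b i : F a = None -> F b = Some i ->
  ncolored (recolor F a b i) = ncolored F.
Proof.
move=> Fa Fb; have nab : a != b by apply/eqP => eab; rewrite eab Fb in Fa.
rewrite /ncolored; have -> : [set j | recolor F a b i j != None] = a |: ([set j | F j != None] :\ b).
  apply/setP => j; rewrite !inE ffunE.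
  by case: (eqVneq j a) => [->|_] //=; case: (eqVneq j b) => [->|_].
by rewrite cardsU1 !inE Fa eqxx /= andbF (cardsD1 b [set j | F j != None]) !inE Fb.
Qed.

Lemma recolorK F a b i : F a = None -> F b = Some i ->
  recolor (recolor F a b i) b a i = F.
Proof.
move=> Fa Fb; apply/ffunP => j; rewrite !ffunE.
case: (eqVneq j b) => [->|njb]; first by rewrite Fb.
by case: (eqVneq j a) => [->|nja]; rewrite ?Fa ?(negbTE njb).
Qed.

Lemma forest_coloring_color_edge F a i x y : forest_coloring F -> F a = None ->
  x != y -> g a = [set x; y] -> ~~ gconn (edges (color_class F i)) x y ->
  forest_coloring (color_edge F a i).
Proof.
move=> hF Fa nxy ea nc i'; have [->|ni] := eqVneq i' i.
  apply: eq_forest (forest_add (hF i) _ nxy ea nc) => [j|]; last by rewrite /color_class Fa.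
  by rewrite /color_class ffunE; case: (eqVneq j a) => [->|_]; rewrite ?eqxx.
apply: eq_forest (hF i') => j; rewrite /color_class ffunE.
case: (eqVneq j a) => [->|_] //; rewrite Fa /=.
by apply/esym/eqP => -[e]; rewrite e eqxx in ni.
Qed.

Lemma forest_coloring_recolor F a b i x y : forest_coloring F -> F a = None ->
  F b = Some i -> x != y -> g a = [set x; y] ->
  ~~ gconn (edges (fun j => color_class F i j && (j != b))) x y ->
  forest_coloring (recolor F a b i).
Proof.
move=> hF Fa Fb nxy ea nc i'; have [->|ni] := eqVneq i' i.
  have hF' : forest (fun j => color_class F i j && (j != b)).
    by apply: forest_sub (hF i) _ => j /andP[].
  apply: eq_forest (forest_add hF' _ nxy ea nc) => [j|]; last by rewrite /color_class Fa.
  rewrite /color_class ffunE.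
  case: (eqVneq j a) => [->|_]; first by rewrite eqxx.
  by case: (eqVneq j b) => [->|_]; rewrite ?andbF ?andbT.
apply: eq_forest (hF i') => j; rewrite /color_class ffunE.
case: (eqVneq j a) => [->|_]; first by rewrite Fa /=; apply/esym/eqP => -[e]; rewrite e eqxx in ni.
case: (eqVneq j b) => [->|_] //; rewrite Fb /=.
by apply/eqP => -[e]; rewrite e eqxx in ni.
Qed.

Lemma sum_count_color F (a : pred 'I_m) s :
  \sum_(i < k) count (fun j => a j && (F j == Some i)) s = count (fun j => a j && (F j != None)) s.
Proof.
elim: s => [|z s IH] /=; first by rewrite big1.
rewrite big_split /= IH; congr (_ + _).
case: (F z) => [i0|] /=; last by rewrite andbF big1 // => i _; rewrite andbF.
rewrite (bigD1 i0) //= eqxx big1 ?addn0 // => i ni.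
by case: (a z); case: eqP => // -[e]; rewrite e eqxx in ni.
Qed.

Lemma perm_color_classes F :
  perm_eq [seq g j | j <- enum 'I_m]
    (flatten [seq edges (color_class F i) | i <- enum 'I_k] ++ edges (fun j => F j == None)).
Proof.
apply/permP => p.
have count_edges P : count p (edges P) = count (fun j => preim g p j && P j) (enum 'I_m).
  by rewrite /edges count_map count_filter.
rewrite count_cat count_map count_flatten sumnE !big_map.
under eq_bigr do rewrite count_edges.
rewrite -enumT big_enum /= sum_count_color count_edges -size_filter -(count_predC (fun j => F j != None)).
by rewrite !count_filter; congr (_ + _); apply: eq_count => j /=;
  rewrite ?negbK [_ && p _]andbC.
Qed.

Lemma coloring_spanning_trees F : forest_coloring F ->
  (forall i x y, gconn (edges (color_class F i)) x y) ->
  has_disjoint_spanning_trees k [seq g j | j <- enum 'I_m].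
Proof.
move=> hF hc; exists [seq edges (color_class F i) | i <- enum 'I_k]; split.
- by rewrite size_map size_enum_ord.
- by move=> T /mapP [i _ ->]; apply: (spanning_tree_forest g2); [exact: hF | exact: hc].
- by exists (edges (fun j => F j == None)); apply: perm_color_classes.
Qed.


Section MaximalColoring.
Variable F0 : coloring.
Hypothesis F0_forest : forest_coloring F0.
Hypothesis F0_max : forall F, forest_coloring F -> ncolored F <= ncolored F0.

Definition exchange F F' := exists a b i,
  [/\ F a = None, F b = Some i, F' = recolor F a b i & forest_coloring F'].

Inductive reachable : coloring -> Prop :=
| reachable0 : reachable F0
| reachableS F F' : reachable F -> exchange F F' -> reachable F'.

Lemma reachable_max F : reachable F -> forest_coloring F /\ ncolored F = ncolored F0.
Proof.
elim=> [|F1 F2 _ [hF1 sF1] [a [b [i [Fa Fb -> hF2]]]]] //.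
by rewrite ncolored_recolor.
Qed.

(* Otherwise j could join the colour class i, contradicting maximality. *)
Lemma reachable_uncolored_linked F j x y : reachable F -> F j = None ->
  x != y -> g j = [set x; y] -> forall i, gconn (edges (color_class F i)) x y.
Proof.
move=> rF Fj nxy ej i; apply/negPn/negP => nc; have [hF sF] := reachable_max rF.
have := F0_max (forest_coloring_color_edge hF Fj nxy ej nc).
by rewrite ncolored_color_edge // sF ltnn.
Qed.

Definition free j : bool := pbool (exists F, reachable F /\ F j = None).

Lemma freeP j : reflect (exists F, reachable F /\ F j = None) (free j).
Proof. exact: pboolP. Qed.

Definition free_class F i : pred 'I_m := fun j => color_class F i j && free j.

Lemma free_exchange F j b i x y : reachable F -> F j = None -> x != y ->
  g j = [set x; y] -> color_class F i b ->
  ~~ gconn (edges (fun j' => color_class F i j' && (j' != b))) x y -> free b.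
Proof.
move=> rF Fj nxy ej /eqP Fb nc; have [hF _] := reachable_max rF.
have hF' := forest_coloring_recolor hF Fj Fb nxy ej nc.
have nbj : b != j by apply/eqP => ebj; rewrite ebj Fj in Fb.
apply/freeP; exists (recolor F j b i); split; last by rewrite ffunE (negbTE nbj) eqxx.
by apply: reachableS rF _; exists j, b, i.
Qed.

(* The i-coloured path joining the ends of an uncoloured edge consists of free
   edges: exchanging any of its edges for the uncoloured one keeps a forest. *)
Lemma reachable_uncolored_free_linked F j x y : reachable F -> F j = None ->
  x != y -> g j = [set x; y] -> forall i, gconn (edges (free_class F i)) x y.
Proof.
move=> rF Fj nxy ej i; have [hF _] := reachable_max rF.
case/connectP: (reachable_uncolored_linked rF Fj nxy ej i) => p pth.
case: (shortenP pth) => {pth}p pth up _ ey.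
apply/connectP; exists p => //; rewrite path_zip; apply/allP => -[u w] huw /=.
have := pth; rewrite path_zip => /allP/(_ _ huw)/andP[nuw /edgesP [b Pb eb]].
rewrite /gadj nuw; apply/edgesP; exists b => //; rewrite /free_class Pb.
apply: (free_exchange rF Fj nxy ej Pb); rewrite ey.
exact: forest_path_cut (hF i) pth up huw Pb (esym eb).
Qed.

Lemma exchange_free_sub F F' i : exchange F F' -> reachable F' ->
  forall u w, gconn (edges (free_class F i)) u w -> gconn (edges (free_class F' i)) u w.
Proof.
move=> [a [b [i0 [Fa Fb eF' _]]]] rF'; apply: connect_sub => u w.
move=> /andP[nuw /edgesP [c /andP[Pc fc] ec]].
have [ecb|ncb] := eqVneq c b.
  apply: (reachable_uncolored_free_linked rF' _ nuw (esym ec)); rewrite ecb.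
  by rewrite eF' ffunE eqxx; case: eqP => // eba; rewrite eba Fa in Fb.
have nca : c != a by apply: contraTneq Pc => ->; rewrite /color_class Fa.
apply: gconn_edge => //; apply/edgesP; exists c => //.
by rewrite /free_class /color_class eF' ffunE (negbTE nca) (negbTE ncb) fc andbT.
Qed.

(* Exchanges are reversible, so free classes can only shrink along them. *)
Lemma reachable_free_sub F i : reachable F ->
  forall u w, gconn (edges (free_class F i)) u w -> gconn (edges (free_class F0 i)) u w.
Proof.
elim=> [//|F1 F2 rF1 IH [a [b [i0 [Fa Fb eF2 hF2]]]]] u w h; apply: IH.
have ex : exchange F2 F1.
  exists b, a, i0; split; last exact: (reachable_max rF1).1.
  - by rewrite eF2 ffunE eqxx; case: eqP => // eba; rewrite eba Fa in Fb.
  - by rewrite eF2 ffunE eqxx.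
  - by rewrite eF2 recolorK.
exact: (exchange_free_sub ex rF1).
Qed.

Lemma free_class_gconn i : gconn (edges (free_class F0 i)) =2 gconn (edges free).
Proof.
move=> u w; apply/idP/idP; first by apply: gconn_edges_sub => j /andP[].
apply: connect_sub => {}u {}w /andP[nuw /edgesP [j /freeP[F [rF Fj]] ej]].
exact: reachable_free_sub rF _ _ (reachable_uncolored_free_linked rF Fj nuw (esym ej) i).
Qed.

Lemma ncomp_color_class i :
  count (fun j => color_class F0 i j && ~~ free j) (enum 'I_m) +
  ncomp (edges (color_class F0 i)) = ncomp (edges free).
Proof.
have hfree : forest (free_class F0 i).
  by apply: (forest_sub (@F0_forest i)) => j /andP[].
have := ncomp_forest g2 (@F0_forest i); have := ncomp_forest g2 hfree.
rewrite (eq_ncomp (free_class_gconn i)) -(count_andC (color_class F0 i) free) /free_class.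
lia.
Qed.

Lemma free_uncrossed j : free j -> ~~ crossing (edges free) (g j).
Proof.
move=> fj; have [x [y [nxy ej]]] := edge_ends g2 j.
by rewrite ej crossing_set2 negbK; apply: gconn_edge => //; apply/edgesP; exists j.
Qed.

Lemma ncomp_free_large i0 x y : ~~ gconn (edges (color_class F0 i0)) x y ->
  count (fun j => crossing (edges free) (g j)) (enum 'I_m) + k + 1 <=
  k * ncomp (edges free).
Proof.
move=> nc0; set c := fun i => ncomp (edges (color_class F0 i)).
have colored j : ~~ free j -> F0 j != None.
  by apply: contraNN => /eqP F0j; apply/freeP; exists F0; split => //; exact: reachable0.
have hcross : count (fun j => crossing (edges free) (g j)) (enum 'I_m) <=
    count (fun j => ~~ free j && (F0 j != None)) (enum 'I_m).
  apply: sub_count => j /= hj.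
  have nfj : ~~ free j by apply: contraTN hj; apply: free_uncrossed.
  by rewrite nfj colored.
have hsum : \sum_(i < k) (count (fun j => ~~ free j && (F0 j == Some i)) (enum 'I_m) + c i) =
    k * ncomp (edges free).
  rewrite (eq_bigr (fun _ => ncomp (edges free))) ?sum_nat_const ?card_ord // => i _.
  by rewrite -(ncomp_color_class i); congr (_ + _); apply: eq_count => j; apply: andbC.
have hc : k.+1 <= \sum_(i < k) c i.
  rewrite (bigD1 i0) //=.
  have : \sum_(i < k | i != i0) 1 <= \sum_(i < k | i != i0) c i.
    by apply: leq_sum => i _; apply: ncomp_gt0 x.
  move/(leq_add (ncomp_ge2 nc0)); apply: leq_trans.
  by rewrite sum1_card cardC1 card_ord; have := ltn_ord i0; lia.
rewrite big_split sum_count_color /= in hsum.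
by rewrite -hsum -addnA addn1 leq_add.
Qed.

End MaximalColoring.

End Colorings.

Lemma map_nth_ord (T : Type) (x0 : T) (s : seq T) :
  [seq nth x0 s j | j : 'I_(size s) <- enum 'I_(size s)] = s.
Proof. by rewrite -[RHS](mkseq_nth x0) /mkseq -val_enum_ord -map_comp. Qed.

Lemma induced_is_edge (V : finType) (E G : seq {set V}) f :
  induced_by E G -> f \in G -> #|f| == 2.
Proof.
move=> [Es [hs hEs /perm_mem ->]] /flattenP [F /(nthP [::]) [i hi <-]].
by rewrite hs in hi; have [_ /allP hF _] := hEs i hi => /hF /andP[].
Qed.

Theorem mainTheorem11 (V : finType) (E : seq {set V}) (tau : nat) :
  0 < tau -> all (fun e => e != set0) E ->
  inherently_connected tau E <->
  (forall r : rel V, strict_total_order r ->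
     has_disjoint_spanning_trees tau (G_order E r)).
Proof.
move=> _ _; split => [hE r _|hG G indG]; first exact/hE/induced_G_order.
pose g (j : 'I_(size G)) := nth set0 G j.
have g2 j : #|g j| == 2 by apply: induced_is_edge indG _; apply: mem_nth.
have [F0 hF0 maxF0] := ex_maximizer (@ncolored _ tau) (@forest_coloring0 _ _ tau g).
have eG : [seq g j | j <- enum 'I_(size G)] = G by exact: map_nth_ord.
rewrite -eG; have [/existsP[i0 /existsP[x /existsP[y nc]]]|/existsPn conn] :=
  boolP [exists i, exists x, exists y, ~~ gconn (edges g (color_class F0 i)) x y]; last first.
  apply: (coloring_spanning_trees g2 hF0) => i x y.
  by move: (conn i) => /existsPn/(_ x)/existsPn/(_ y)/negbNE.
set B := edges g (free g F0).
have := ncomp_free_large g2 hF0 maxF0 nc; rewrite -/B.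
have := ncomp_le_crossings_induced (hG _ (comp_order_strict_total B)) indG.
rewrite -[X in count _ X]eG count_map => ub lb.
by have := leq_trans lb ub; rewrite addn1 ltnn.
Qed.
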